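(* Let $q$ be a prime, $A$ a group of exponent $q$ and order $q^3$, and $B$ a subgroup of order $q$ of the center $Z(A)$. Suppose $A$ acts by automorphisms on a finite group $G$ of order coprime to $q$ with $G=PH$, where $P$ and $H$ are $A$-invariant subgroups, $P$ is a normal $p$-subgroup of $G$ for a prime $p$, and $H$ is a nilpotent $p'$-subgroup. Let $A_1,\dots,A_{q+1}$ be the subgroups of order $q^2$ of $A$ containing $B$. Then $C_P(B)=\prod_{i=1}^{q+1} C_P(A_i)$ and $C_H(B)=\prod_{i=1}^{q+1} C_H(A_i)$.
   Context: For a group $X$ of automorphisms, $C_P(X)$ denotes the set of elements of $P$ fixed by every element of $X$. The products are products of subgroups (sets of products of elements). *)

From mathcomp Require Import all_boot all_fingroup all_solvable.
Set Implicit Arguments.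
Unset Strict Implicit.
Unset Printing Implicit Defensive.

From mathcomp Require Import all_boot all_fingroup ssralg all_solvable.
From mathcomp Require Import zify.
Set Implicit Arguments.
Unset Strict Implicit.
Unset Printing Implicit Defensive.

(* Write Q for C_K(B) (K = P or H); it is A-invariant and centralised by B.
   Every a in A \ B lies in exactly one of the A_i, namely <a>B, and there
   are q + 1 of them.  If Q is abelian, view it as a Z[A]-module with traces
   Tr_X(u) = sum_(a in X) u^a; counting gives
     sum_i Tr_(A_i)(u) = Tr_A(u) + q |B| u,
   so q^2 u = (Tr_(A_1)(u) - Tr_A(u)) + sum_(i > 1) Tr_(A_i)(u), whose i-th
   term lies in C_Q(A_i); as q is prime to |Q|, Q = prod_i C_Q(A_i).  For
   nilpotent Q induct on |Q| through Q / Z(Q): under coprime action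
   centralisers pass to quotients, and the factor Z(Q) = prod_i C_Z(Q)(A_i)
   is central, hence absorbed by the product. *)

Import GroupScope.

Section Sunflower.
Variable gT : finGroupType.

Definition sunflower_cover (B A : {set gT}) (s : seq {group gT}) :=
  {in s, forall X : {group gT}, B \subset X /\ X \subset A} /\
  {in A :\: B, forall a, count (fun X : {group gT} => a \in X) s = 1%N}.

Lemma sunflower_cover_sub B A s :
  sunflower_cover B A s -> (0 < size s)%N -> B \subset A.
Proof.
case: s => // X s [sBXA _] _.
by have [sBX sXA] := sBXA X (mem_head X s); apply: subset_trans sXA.
Qed.

Lemma card_sunflower B A s :
  sunflower_cover B A s -> #|A :\: B| = (\sum_(X <- s) #|X :\: B|)%N.
Proof.
move=> [sBXA cnt].
transitivity (\sum_(a in A :\: B) \sum_(X <- s | a \in X) 1)%N.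
  by rewrite -sum1_card; apply: eq_bigr => a Aa; rewrite sum1_count cnt.
rewrite (exchange_big_dep xpredT) //=; apply: eq_big_seq => X /sBXA[_ sXA].
rewrite sum1_card; apply: eq_card => a; rewrite unfold_in !inE andbAC.
by case: (boolP (a \in X)) => [/(subsetP sXA) -> | _]; rewrite ?andbT ?andbF.
Qed.

Variables (q : nat) (A B : {group gT}) (s : seq {group gT}).
Hypotheses (q_pr : prime q) (oB : #|B| = q) (sBA : B \subset A).
Hypothesis defs :
  forall X : {group gT},
  (X \in s) = [&& B \subset X, X \subset A & #|X| == (q ^ 2)%N].

Lemma sunflower_cover_order_sq :
  exponent A = q -> A \subset 'N(B) -> uniq s -> sunflower_cover B A s.
Proof.
move=> expA nBA uniq_s; split=> [X | a /setDP[Aa nBa]].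
  by rewrite defs => /and3P[].
have oa : #[a] = q.
  apply/(prime_nt_dvdP q_pr); last by rewrite -expA dvdn_exponent.
  by rewrite order_eq1; apply: contraNneq nBa => ->.
pose aB := (<[a]> <*> B)%G.
have oaB : #|aB| = (q ^ 2)%N.
  have tiaB : <[a]> :&: B = 1.
    by apply: prime_TIg; rewrite ?cycle_subG // -orderE oa.
  rewrite /= norm_joinEl ?cycle_subG ?(subsetP nBA) // TI_cardMg //.
  by rewrite -orderE oa oB.
have s_aB : aB \in s.
  by rewrite defs joing_subr join_subG cycle_subG Aa sBA oaB /=.
have <- : count_mem aB s = 1%N by rewrite count_uniq_mem // s_aB.
apply: eq_in_count => X; rewrite defs => /and3P[sBX sXA /eqP oX] /=.
apply/idP/eqP => [Xa | ->]; last by rewrite mem_gen // inE cycle_id.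
apply: val_inj; apply/eqP; rewrite /= eq_sym eqEcard oX oaB leqnn andbT.
by rewrite join_subG cycle_subG Xa.
Qed.

Lemma size_sunflower_cover_order_sq :
  #|A| = (q ^ 3)%N -> sunflower_cover B A s -> size s = q.+1.
Proof.
move=> oA cover; have q_gt1 := prime_gt1 q_pr.
have oXB X : X \in s -> #|X :\: B| = (q ^ 2 - q)%N.
  by rewrite defs => /and3P[sBX _ /eqP oX]; rewrite cardsD (setIidPr sBX) oX oB.
have := card_sunflower cover; rewrite cardsD (setIidPr sBA) oA oB.
rewrite (eq_big_seq _ oXB) big_const_seq count_predT iter_addn_0.
have -> : (q ^ 3 - q = (q ^ 2 - q) * q.+1)%N by rewrite !expnS expn0 !muln1; nia.
move/eqP; rewrite eqn_pmul2l => [/eqP // |].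
by rewrite subn_gt0 -{1}(expn1 q) ltn_exp2l.
Qed.

End Sunflower.

Section TraceModule.
Import GRing.Theory FiniteModule.
Local Open Scope ring_scope.

Variables (gT : finGroupType) (Q A : {group gT}) (abQ : abelian Q).
Hypothesis nQA : A \subset 'N(Q).

Definition trace (X : {set gT}) (u : fmod_of abQ) := \sum_(a in X) u ^@ a.

Lemma fmval_cent (X : {set gT}) (v : fmod_of abQ) :
  X \subset A -> {in X, forall b, v ^@ b = v} -> fmval v \in 'C_Q(X).
Proof.
move=> sXA fix_v; rewrite inE fmodP; apply/centP=> b Xb.
apply/commgP/conjg_fixP; rewrite -fmvalJ ?fix_v //.
exact: subsetP nQA b (subsetP sXA b Xb).
Qed.

Lemma traceJ (X : {group gT}) u b :
  X \subset A -> b \in X -> trace X u ^@ b = trace X u.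
Proof.
move=> sXA Xb; have nQX := subset_trans sXA nQA.
rewrite actr_sum [RHS](reindex_inj (mulIg b)) /=.
apply: eq_big => [a | a Xa]; first by rewrite groupMr.
by rewrite actrM ?(subsetP nQX).
Qed.

Lemma fmval_trace_cent (X : {group gT}) u :
  X \subset A -> fmval (trace X u) \in 'C_Q(X).
Proof. by move=> sXA; apply: fmval_cent => // b; apply: traceJ. Qed.

Lemma fmval_sum_trace_cent (r : seq {group gT}) u :
  {in r, forall X : {group gT}, X \subset A} ->
  fmval (\sum_(X <- r) trace X u) \in (\prod_(X <- r) 'C_Q(X))%g.
Proof.
elim: r => [|X r IHr] sXA; first by rewrite !big_nil fmval0 set11.
rewrite !big_cons fmvalA mem_mulg ?fmval_trace_cent ?sXA ?mem_head ?IHr //.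
by move=> Y rY; apply: sXA; rewrite inE rY orbT.
Qed.

Lemma sum_trace_count (r : seq {group gT}) u :
  {in r, forall X : {group gT}, X \subset A} ->
  \sum_(X <- r) trace X u =
    \sum_(a in A) u ^@ a *+ count (fun X : {group gT} => a \in X) r.
Proof.
elim: r => [|X r IHr] sXA; first by rewrite big_nil big1.
rewrite big_cons IHr => [|Y rY]; last by apply: sXA; rewrite inE rY orbT.
have sXA_X : X \subset A by apply: sXA; apply: mem_head.
have -> : trace X u = \sum_(a in A) u ^@ a *+ (a \in X).
  rewrite (bigID [in X]) /= addrC big1 ?add0r; last first.
    by move=> a /andP[_ /negbTE->].
  apply: eq_big => [a | a ->]; last exact: mulr1n.
  by rewrite andb_idl // => /(subsetP sXA_X).
by rewrite -big_split; apply: eq_bigr => a _ /=; rewrite -mulrnDr.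
Qed.

Lemma sum_trace_sunflower (B : {group gT}) (s : seq {group gT}) u :
  Q \subset 'C(B) -> sunflower_cover B A s -> (0 < size s)%N ->
  \sum_(X <- s) trace X u = trace A u + u *+ ((size s).-1 * #|B|).
Proof.
move=> cQB cover s0; have sBA := sunflower_cover_sub cover s0.
have [sBXA cnt] := cover.
have fixB a : a \in B -> u ^@ a = u.
  move=> Ba; apply: val_inj; rewrite /= fmvalJ ?(subsetP nQA) ?(subsetP sBA) //.
  by apply/conjg_fixP/commgP; apply: (centP (subsetP cQB _ (fmodP u))).
have -> : u *+ ((size s).-1 * #|B|) =
          \sum_(a in A) (if a \in B then u *+ (size s).-1 else 0).
  rewrite -big_mkcondr /= (eq_bigl [in B]) ?sumr_const ?mulrnA // => a.
  by rewrite andb_idl // => /(subsetP sBA).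
rewrite sum_trace_count => [|X /sBXA[] //]; rewrite -big_split /=.
apply: eq_bigr => a Aa; have [Ba | nBa] := boolP (a \in B); last first.
  by rewrite cnt ?addr0 // inE nBa.
have -> : count (fun X : {group gT} => a \in X) s = size s.
  by rewrite -count_predT; apply: eq_in_count => X /sBXA[/subsetP->].
by rewrite fixB // -{1}(prednK s0) mulrS.
Qed.

Lemma abelian_sub_prod_cent (B : {group gT}) (s : seq {group gT}) :
  Q \subset 'C(B) -> coprime #|Q| #|A| -> coprime #|Q| (size s).-1 ->
  sunflower_cover B A s -> (0 < size s)%N ->
  Q \subset (\prod_(X <- s) 'C_Q(X))%g.
Proof.
move=> cQB coQA coQs cover s0; apply/subsetP=> x Qx.
set m := ((size s).-1 * #|B|)%N.
have coQm : coprime #|Q| m.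
  have sBA := sunflower_cover_sub cover s0.
  by rewrite coprimeMr coQs (coprime_dvdr (cardSg sBA)).
have [w Qw ->] : exists2 w, w \in Q & x = (w ^+ m)%g.
  by exists (x ^+ expg_invn Q m)%g; rewrite ?groupX // expgAC expgK.
have -> : (w ^+ m)%g = fmval (fmod abQ w *+ m) by rewrite fmvalZ fmodK.
rewrite -(addKr (trace A (fmod abQ w)) (_ *+ _)) -sum_trace_sunflower //.
have [sBXA _] := cover; case: s s0 sBXA {coQs cover coQm m} => // X1 s _ sBXA.
have [_ sX1A] := sBXA X1 (mem_head X1 s).
rewrite !big_cons addrA fmvalA mem_mulg //.
  apply: fmval_cent => // b X1b.
  by rewrite actAr actNr !traceJ ?(subsetP sX1A).
apply: fmval_sum_trace_cent => X sX.
by have [] := sBXA X; rewrite // inE sX orbT.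
Qed.

End TraceModule.

Section CoprimeQuotient.
Variable gT : finGroupType.
Implicit Types (A N Q X : {group gT}) (s : seq {group gT}).

Lemma mem_quotient_TI N A X a :
  A \subset 'N(N) -> A :&: N = 1 -> X \subset A -> a \in A ->
  (coset N a \in X / N) = (a \in X).
Proof.
move=> nNA tiAN sXA Aa; apply/idP/idP => [Xa | ]; last exact: mem_quotient.
have : a \in coset N @*^-1 (X / N) by apply/morphpreP; rewrite (subsetP nNA).
rewrite quotientK ?(subset_trans sXA) // => NXa.
have : a \in A :&: (N * X) by rewrite inE Aa.
by rewrite -group_modr // tiAN mul1g.
Qed.

Lemma sunflower_cover_quotient N A B s :
  A \subset 'N(N) -> A :&: N = 1 -> sunflower_cover B A s ->
  sunflower_cover (B / N) (A / N) [seq (X / N)%G | X <- s].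
Proof.
move=> nNA tiAN [sBXA cnt]; split.
  by move=> _ /mapP[X sX ->]; have [sBX sXA] := sBXA X sX; rewrite !quotientS.
move=> _ /setDP[/morphimP[a Na Aa ->] nBa].
rewrite count_map -(cnt a); last first.
  by rewrite inE Aa andbT; apply: contraNN nBa; apply: mem_morphim.
apply: eq_in_count => X sX /=; have [_ sXA] := sBXA X sX.
exact: (mem_quotient_TI nNA tiAN sXA Aa).
Qed.

Lemma quotient_prod (I : Type) (r : seq I) (F : I -> {set gT}) N :
  (forall i, F i \subset 'N(N)) ->
  \prod_(i <- r) (F i / N) = (\prod_(i <- r) F i) / N.
Proof.
move=> nNF; elim: r => [|i r IHr]; first by rewrite !big_nil quotient1.
by rewrite !big_cons quotientMl ?IHr.
Qed.

Lemma mul_prod_cent_central N Q s :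
  N \subset Q -> N \subset 'C(Q) ->
  (\prod_(X <- s) 'C_N(X)) * (\prod_(X <- s) 'C_Q(X))
    \subset \prod_(X <- s) 'C_Q(X).
Proof.
move=> sNQ cNQ; elim: s => [|X s IHs]; first by rewrite !big_nil mul1g.
rewrite !big_cons; set CN := \prod_(Y <- s) 'C_N(Y).
have cCN : CN \subset 'C('C_Q(X)).
  apply: subset_trans (centS (subsetIl Q 'C(X))).
  by apply: subset_trans cNQ; apply: prod_subG => Y _; apply: subsetIl.
rewrite -mulgA [X in _ * X]mulgA (centC cCN) -!mulgA mulgA.
by apply: mulgSS IHs; rewrite mul_subG ?setSI.
Qed.

End CoprimeQuotient.

Theorem nilpotent_sub_prod_cent (gT : finGroupType) (Q A B : {group gT})
    (s : seq {group gT}) :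
  nilpotent Q -> A \subset 'N(Q) -> Q \subset 'C(B) ->
  coprime #|Q| #|A| -> coprime #|Q| (size s).-1 ->
  sunflower_cover B A s -> (0 < size s)%N ->
  Q \subset \prod_(X <- s) 'C_Q(X).
Proof.
have [n] := ubnP #|Q|; elim: n gT Q A B s => // n IHn gT Q A B s leQn.
move=> nilQ nQA cQB coQA coQs cover s0.
have [abQ | nabQ] := boolP (abelian Q).
  exact: (abelian_sub_prod_cent abQ nQA cQB coQA coQs cover s0).
pose N := 'Z(Q)%G.
have sNQ : N \subset Q := center_sub Q.
have cNQ : N \subset 'C(Q) := subsetIr Q _.
have nNQ : Q \subset 'N(N) := normal_norm (center_normal Q).
have nNA : A \subset 'N(N) := char_norm_trans (center_char Q) nQA.
have coNA : coprime #|N| #|A| := coprimeSg sNQ coQA.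
have tiAN : A :&: N = 1 by rewrite setIC coprime_TIg.
have ntN : N :!=: 1.
  rewrite /= (center_nil_eq1 nilQ).
  by apply: contraNneq nabQ => ->; apply: abelian1.
have sN_prod : N \subset \prod_(X <- s) 'C_N(X).
  apply: (abelian_sub_prod_cent (center_abelian Q) nNA) _ coNA _ cover s0.
    exact: subset_trans cQB.
  exact: coprimeSg sNQ coQs.
have sQbar : Q / N \subset \prod_(X <- s) 'C_(Q / N)(X / N).
  rewrite -(big_map (fun X => (X / N)%G) xpredT (fun X => 'C_(Q / N)(X))).
  apply: (IHn _ _ (A / N)%G (B / N)%G);
    rewrite ?size_map ?quotient_nil ?quotient_norms ?coprime_morph //.
  - by rewrite (leq_trans (ltn_quotient ntN sNQ)).
  - exact: quotient_cents.
  - exact: coprime_dvdl (dvdn_quotient _ _) coQs.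
  - exact: sunflower_cover_quotient.
have cent_quotient X : X \in s -> 'C_(Q / N)(X / N) = 'C_Q(X) / N.
  have [sBXA _] := cover; move=> /sBXA[_ sXA]; symmetry.
  apply: coprime_norm_quotient_cent; rewrite ?abelian_sol ?center_abelian //.
  - exact: subset_trans nQA.
  - exact: subset_trans nNA.
  - exact: coprimegS sXA coNA.
rewrite (eq_big_seq _ cent_quotient) quotient_prod ?quotientSK // in sQbar.
  apply: subset_trans sQbar (subset_trans (mulSg _ sN_prod) _).
  exact: mul_prod_cent_central.
by move=> X; apply: subset_trans nNQ; apply: subsetIl.
Qed.

Lemma cent_sunflower_prod (gT : finGroupType) (K A B : {group gT})
    (s : seq {group gT}) :
  nilpotent K -> A \subset 'N(K) -> A \subset 'C(B) ->
  coprime #|K| #|A| -> coprime #|K| (size s).-1 ->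
  sunflower_cover B A s -> (0 < size s)%N ->
  'C_K(B) = \prod_(X <- s) 'C_K(X).
Proof.
move=> nilK nKA cAB coKA coKs cover s0; have [sBXA _] := cover.
have sCK : 'C_K(B) \subset K := subsetIl K _.
have centC_KB X : X \in s -> 'C_('C_K(B))(X) = 'C_K(X).
  by move=> /sBXA[sBX _]; rewrite -setIA (setIidPr (centS sBX)).
apply/eqP; rewrite eqEsubset; apply/andP; split; last first.
  by rewrite big_seq prod_subG // => X /sBXA[sBX _]; rewrite setIS ?centS.
rewrite -(eq_big_seq _ centC_KB).
rewrite (nilpotent_sub_prod_cent _ _ _ _ _ cover) ?subsetIr //.
- exact: (nilpotentS sCK nilK).
- exact: (normsI nKA (norms_cent (cents_norm cAB))).
- exact: (coprimeSg sCK coKA).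
- exact: (coprimeSg sCK coKs).
Qed.

Theorem lemma2p3 (gT : finGroupType) (q p : nat) (A B G P H : {group gT})
    (s : seq {group gT}) :
  prime q -> prime p ->
  exponent A = q -> #|A| = (q ^ 3)%N ->
  B \subset 'Z(A) -> #|B| = q ->
  A \subset 'N(G) -> coprime #|G| q ->
  P * H = G ->
  A \subset 'N(P) -> A \subset 'N(H) ->
  P <| G -> p.-group P ->
  nilpotent H -> p^'.-group H ->
  uniq s ->
  (forall X : {group gT}, (X \in s) = [&& B \subset X, X \subset A & #|X| == (q ^ 2)%N]) ->
  'C_P(B) = \prod_(X <- s) 'C_P(X) /\ 'C_H(B) = \prod_(X <- s) 'C_H(X).
Proof.
move=> q_pr _ expA oA sBZ oB _ coGq defG nPA nHA nsPG pP nilH _ uniq_s defs.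
have sBA : B \subset A := subset_trans sBZ (center_sub A).
have cAB : A \subset 'C(B) by rewrite centsC (subset_trans sBZ) ?subsetIr.
have cover :=
  sunflower_cover_order_sq q_pr oB sBA defs expA (cents_norm cAB) uniq_s.
have size_s := size_sunflower_cover_order_sq q_pr oB sBA defs oA cover.
have coGA : coprime #|G| #|A| by rewrite oA coprimeXr.
have coGs : coprime #|G| (size s).-1 by rewrite size_s.
have sPG : P \subset G := normal_sub nsPG.
have sHG : H \subset G by rewrite -defG mulG_subr.
have s0 : (0 < size s)%N by rewrite size_s.
split; apply: cent_sunflower_prod cover s0 => //.
- exact: (pgroup_nil pP).
- exact: (coprimeSg sPG coGA).
- exact: (coprimeSg sPG coGs).
- exact: (coprimeSg sHG coGA).
- exact: (coprimeSg sHG coGs).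
Qed.
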